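(* A tree $T$ that has a vertex $v$ with $\deg(v)\geq 4$, or two distinct vertices $u,v$ with $\deg(u)\geq 3$ and $\deg(v)\geq 3$, is not in $\mathcal{G}^{\rm SSP}$.
   Context: All graphs are finite, simple, undirected. For a graph $G$ on $\{1,\ldots,n\}$, $\mathcal{S}(G)$ is the set of real symmetric $n\times n$ matrices $A=(a_{ij})$ with $a_{ij}\neq0$ iff $\{i,j\}\in E(G)$ for $i\neq j$ (diagonal arbitrary). A real symmetric $A$ has the strong spectral property (SSP) if the only real symmetric $X$ with $A\circ X=0$, $I\circ X=0$, $AX-XA=0$ is $X=0$ ($\circ$ = entrywise product). $\mathcal{G}^{\rm SSP}$ is the set of graphs $G$ such that every matrix in $\mathcal{S}(G)$ has the SSP. *)

From HB Require Import structures.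
From mathcomp Require Import all_boot all_order all_algebra.
From mathcomp Require Import reals.
Set Implicit Arguments. Unset Strict Implicit. Unset Printing Implicit Defensive.
Import Order.TTheory GRing.Theory Num.Theory.
Local Open Scope ring_scope.

(* A simple graph on vertex set 'I_n (= {0,..,n-1}, relabelling of {1..n})
   is given by a symmetric irreflexive adjacency relation e. *)
Definition simple_graph (n : nat) (e : rel 'I_n) : Prop :=
  symmetric e /\ irreflexive e.

Definition connected_graph (n : nat) (e : rel 'I_n) : Prop :=
  forall x y : 'I_n, connect e x y.

Definition acyclic_graph (n : nat) (e : rel 'I_n) : Prop :=
  forall c : seq 'I_n, uniq c -> (2 < size c)%N -> ~~ cycle e c.

Definition is_tree (n : nat) (e : rel 'I_n) : Prop :=
  connected_graph e /\ acyclic_graph e.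

Definition deg (n : nat) (e : rel 'I_n) (v : 'I_n) : nat := #|[set w | e v w]|.

Definition in_S (R : realType) (n : nat) (e : rel 'I_n) (A : 'M[R]_n) : Prop :=
  A^T = A /\ (forall i j : 'I_n, i != j -> (A i j != 0) = e i j).

Definition SSP (R : realType) (n : nat) (A : 'M[R]_n) : Prop :=
  forall X : 'M[R]_n, X^T = X ->
    map2_mx (fun a x => a * x) A X = 0 ->
    map2_mx (fun a x => a * x) (1%:M : 'M[R]_n) X = 0 ->
    A *m X - X *m A = 0 ->
    X = 0.

Definition in_G_SSP (R : realType) (n : nat) (e : rel 'I_n) : Prop :=
  forall A : 'M[R]_n, in_S e A -> SSP A.

From HB Require Import structures.
From mathcomp Require Import all_boot all_order all_algebra.
From mathcomp Require Import reals zify.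
Set Implicit Arguments. Unset Strict Implicit. Unset Printing Implicit Defensive.
Import Order.TTheory GRing.Theory Num.Theory.

Local Open Scope ring_scope.

(* Fix a set S of vertices of a simple graph G and let A be the adjacency
   matrix of G minus the diagonal matrix of the degrees in G - S; A is in
   S(G). It maps the indicator vector of a connected component C of G - S to
   the vector that counts, at each s in S, the edges from s into C. So if a, b,
   c, d lie in four distinct components of G - S, the components of a and b
   (and those of c and d) being attached to S in the same way, then
   x = 1_{C_a} - 1_{C_b} and y = 1_{C_c} - 1_{C_d} lie in the kernel of A, and
   X = x y^T + y x^T is a nonzero symmetric matrix commuting with A that
   vanishes on the diagonal and on the edges, so A does not have the SSP.
   In a forest each branch at a vertex w hangs from w by a single edge; take
   S = {v} and four branches at a vertex v of degree at least 4, or S = {u, v}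
   and, at each of u and v, two branches avoiding the other vertex (a vertex
   of degree at least 3 has at most one branch containing the other). *)

Lemma sumr_nat_indicator (R : pzSemiRingType) (T : finType) (P : pred T) :
  \sum_i (P i)%:R = #|[set i | P i]|%:R :> R.
Proof.
rewrite -sum1_card natr_sum [RHS]big_mkcond /=.
by apply: eq_bigr => i _; rewrite inE; case: (P i).
Qed.

Lemma not_SSP_of_kernel_pair (R : realType) (n : nat) (A : 'M[R]_n)
    (x y : 'cV[R]_n) :
  A^T = A -> A *m x = 0 -> A *m y = 0 ->
  (forall i j, (i == j) || (A i j != 0) -> x i 0 * y j 0 = 0) ->
  x *m y^T + y *m x^T != 0 -> ~ SSP A.
Proof.
move=> A_sym Ax Ay xy0 /eqP X_neq0 A_SSP; apply: X_neq0.
set X := x *m y^T + y *m x^T.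
have X0 i j : (i == j) || (A i j != 0) -> X i j = 0.
  have Aji : A j i = A i j by rewrite -[in LHS]A_sym mxE.
  move=> ij; rewrite !mxE !big_ord1 !mxE xy0 // mulrC xy0 ?addr0 //.
  by rewrite eq_sym Aji.
have xTA : x^T *m A = 0 by rewrite -A_sym -trmx_mul Ax trmx0.
have yTA : y^T *m A = 0 by rewrite -A_sym -trmx_mul Ay trmx0.
apply: A_SSP.
- by rewrite raddfD /= !trmx_mul !trmxK addrC.
- apply/matrixP => i j; rewrite [LHS]mxE [RHS]mxE.
  have [/X0 -> | ] := boolP ((i == j) || (A i j != 0)); first by rewrite mulr0.
  by rewrite negb_or negbK => /andP [_ /eqP ->]; rewrite mul0r.
- apply/matrixP => i j; rewrite [LHS]mxE [RHS]mxE.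
  have [-> | ij] := eqVneq i j; first by rewrite X0 ?eqxx ?mulr0.
  by rewrite mxE (negbTE ij) mulr0n mul0r.
- rewrite /X mulmxDr mulmxDl !mulmxA Ax Ay -!mulmxA xTA yTA.
  by rewrite !mul0mx !mulmx0 !addr0 subrr.
Qed.

Section Components.
Variables (n : nat) (e : rel 'I_n).
Hypothesis e_sym : symmetric e.
Implicit Types (S : {set 'I_n}) (a b c i j k s w : 'I_n).

Definition del_vertices S : rel 'I_n :=
  [rel x y | [&& e x y, x \notin S & y \notin S]].

Definition component S a : pred 'I_n := connect (del_vertices S) a.

Definition attach S a s : nat := #|[set j | e s j & component S a j]|.

Lemma del_vertices_sym S : symmetric (del_vertices S).
Proof.
by move=> x y; rewrite /del_vertices /= e_sym; congr (_ && _); apply: andbC.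
Qed.

Lemma component_refl S a : component S a a.
Proof. exact: connect0. Qed.

Lemma component_sym S a b : component S a b = component S b a.
Proof. exact/sym_connect_sym/del_vertices_sym. Qed.

Lemma component_notin S a k : a \notin S -> component S a k -> k \notin S.
Proof.
move=> aS /connectP [p + ->]; elim: p a aS => //= y p IHp a _.
by case/andP => /and3P [_ _ yS]; apply: IHp.
Qed.

Lemma component_step S a j k :
  component S a j -> e j k -> j \notin S -> k \notin S -> component S a k.
Proof.
move=> aj ejk jS kS; apply: connect_trans aj (connect1 _).
by rewrite /del_vertices /= ejk jS.
Qed.

Lemma component_subset S S' a k :
  S' \subset S -> component S a k -> component S' a k.
Proof.
move=> sub; apply: connect_sub => x y /and3P [exy xS yS]; apply: connect1.
by rewrite /del_vertices /= exy !(contra (subsetP sub _)).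
Qed.

Lemma component_join S a c i j :
  a \notin S -> c \notin S -> component S a i -> component S c j ->
  (i == j) || e i j -> component S a c.
Proof.
move=> aS cS ai cj ij; apply: connect_trans (_ : component S j c); last first.
  by rewrite component_sym.
case/orP: ij => [/eqP <- // | eij].
by apply: component_step ai eij (component_notin aS ai) (component_notin cS cj).
Qed.

Lemma attach_component S a c : component S a c -> attach S a =1 attach S c.
Proof.
move=> ac s; apply: eq_card => j; rewrite !inE /component.
by rewrite (same_connect (sym_connect_sym (del_vertices_sym S)) ac).
Qed.

Lemma nbrs_in_component S a k : a \notin S -> component S a k ->
  [set j | e k j & component S a j] = [set j | e k j & j \notin S].
Proof.
move=> aS ak; apply/setP => j; rewrite !inE; apply: andb_id2l => ekj.
apply/idP/idP => [/(component_notin aS) // | jS].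
exact: component_step ak ekj (component_notin aS ak) jS.
Qed.

Lemma attach_notin S a k :
  a \notin S -> k \notin S -> ~~ component S a k -> attach S a k = 0%N.
Proof.
move=> aS kS nak; apply/eqP; rewrite cards_eq0; apply/eqP/setP => j.
rewrite !inE; apply/negbTE; apply: contra nak => /andP [ekj aj].
by apply: component_step aj _ (component_notin aS aj) kS; rewrite e_sym.
Qed.

Variable R : realType.

Definition adj_deg_mx S : 'M[R]_n :=
  \matrix_(i, j) ((e i j)%:R - (i == j)%:R * #|[set k | e i k & k \notin S]|%:R).

Definition component_vec S a : 'cV[R]_n := \col_k (component S a k)%:R.

Lemma adj_deg_mx_in_S S : in_S e (adj_deg_mx S).
Proof.
split=> [|i j ij]; last first.
  by rewrite mxE (negbTE ij) mul0r subr0 pnatr_eq0 eqb0 negbK.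
apply/matrixP => i j; rewrite !mxE e_sym eq_sym.
by have [-> | _] := eqVneq j i; rewrite ?mul0r.
Qed.

Lemma adj_deg_mx_component S a : a \notin S ->
  adj_deg_mx S *m component_vec S a = \col_k ((k \in S)%:R * (attach S a k)%:R).
Proof.
move=> aS; apply/matrixP => k i0; rewrite !mxE.
under eq_bigr => j _ do rewrite !mxE mulrBl -mulrA -[X in X - _]natrM mulnb.
rewrite sumrB sumr_nat_indicator (bigD1 k) //= eqxx mul1r big1 ?addr0;
  last by move=> j; rewrite eq_sym => /negbTE ->; rewrite mul0r.
rewrite -/(attach S a k).
have [ak | nak] := boolP (component S a k).
  rewrite (negbTE (component_notin aS ak)) /attach nbrs_in_component //.
  by rewrite mulr1 mul0r subrr.
rewrite mulr0 subr0; have [kS | kS] := boolP (k \in S); first by rewrite mul1r.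
by rewrite attach_notin // mulr0.
Qed.

Lemma adj_deg_mx_component_sub S a b :
  a \notin S -> b \notin S -> {in S, attach S a =1 attach S b} ->
  adj_deg_mx S *m (component_vec S a - component_vec S b) = 0.
Proof.
move=> aS bS attach_ab; rewrite mulmxBr !adj_deg_mx_component //.
apply/matrixP => k i0; rewrite !mxE.
by have [/attach_ab -> | _] := boolP (k \in S); rewrite ?mul0r subrr.
Qed.

Lemma not_in_G_SSP_of_components S a b c d :
  [/\ a \notin S, b \notin S, c \notin S & d \notin S] ->
  ~~ component S a b -> ~~ component S c d ->
  [/\ ~~ component S a c, ~~ component S a d,
      ~~ component S b c & ~~ component S b d] ->
  {in S, attach S a =1 attach S b} -> {in S, attach S c =1 attach S d} ->
  ~ in_G_SSP R e.
Proof.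
move=> [aS bS cS dS] nab ncd [nac nad nbc nbd] attach_ab attach_cd G_SSP.
have [A_sym A_pattern] := adj_deg_mx_in_S S.
have apart p q i j : p \notin S -> q \notin S -> ~~ component S p q ->
    (i == j) || e i j -> component S p i && component S q j = false.
  move=> pS qS npq ij; apply/negbTE; apply: contra npq => /andP [pi qj].
  exact: component_join pS qS pi qj ij.
set x := component_vec S a - component_vec S b.
set y := component_vec S c - component_vec S d.
apply: (@not_SSP_of_kernel_pair _ _ (adj_deg_mx S) x y).
- exact: A_sym.
- exact: adj_deg_mx_component_sub.
- exact: adj_deg_mx_component_sub.
- move=> i j ij; have {}ij : (i == j) || e i j.
    by case: eqVneq ij => //= ij; rewrite A_pattern.
  rewrite !mxE mulrBl !mulrBr -!natrM !mulnb !apart //.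
  by rewrite !subrr.
- apply/eqP => /matrixP /(_ a c); rewrite !mxE !big_ord1 !mxE.
  rewrite !component_refl (component_sym S b a) (component_sym S d c).
  rewrite (component_sym S c a) (component_sym S d a).
  rewrite (negbTE nab) (negbTE ncd) (negbTE nac) (negbTE nad) /=.
  by rewrite subr0 mulr1 subrr mul0r addr0 => /eqP; rewrite oner_eq0.
- exact: G_SSP.
Qed.

Section Forest.
Hypotheses (e_irr : irreflexive e) (e_acyc : acyclic_graph e).

Lemma nbr_neq w x : e w x -> x != w.
Proof. by apply: contraTneq => ->; rewrite e_irr. Qed.

Lemma nbrs_disconnected S w a a' :
  w \in S -> e w a -> e w a' -> a != a' -> ~~ component S a a'.
Proof.
move=> wS ewa ewa' aa'; apply/negP => /connectP [p p_path a'E].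
subst a'; case/shortenP: p_path ewa' aa' => q q_path q_uniq _.
have q_out : all (fun y => y \notin S) q.
  move: q_path; clear q_uniq.
  by elim: q (a) => //= y q IHq x /andP [/and3P [_ _ ->] /IHq].
case: q => [|z q] in q_path q_uniq q_out * => ew_last; first by rewrite eqxx.
(* The simple path a, z, ..., a' avoids S, hence w, and closes a cycle at w. *)
have c_uniq : uniq (w :: a :: z :: q).
  rewrite cons_uniq q_uniq andbT inE negb_or eq_sym nbr_neq //=.
  by apply: contraTN wS => /(allP q_out).
have c_cycle : cycle e (w :: a :: z :: q).
  have a_path : path e a (z :: q) by apply: sub_path q_path => x y /and3P [].
  have : path e a (rcons (z :: q) w) by rewrite rcons_path a_path e_sym.
  by rewrite /= ewa.
by move/negP: (e_acyc c_uniq isT).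
Qed.

Lemma attach_nbr S w a : w \in S -> e w a -> attach S a w = 1%N.
Proof.
move=> wS ewa; rewrite /attach -(cards1 a); congr #|pred_of_set _|.
apply/setP => j; rewrite !inE.
apply/andP/eqP => [[ewj aj] | ->]; last by rewrite ewa component_refl.
apply: contraTeq aj => ja.
by apply: nbrs_disconnected wS ewa ewj _; rewrite eq_sym.
Qed.

Lemma attach_far S w a s : w \in S -> a \notin S -> s != w ->
  ~~ component [set w] a s -> attach S a s = 0%N.
Proof.
move=> wS aS sw nas; apply/eqP; rewrite cards_eq0; apply/eqP/setP => j.
rewrite !inE; apply/negbTE; apply: contra nas => /andP [esj aj].
have jS := component_notin aS aj.
apply: component_step (component_subset _ aj) _ _ _.
- by rewrite sub1set.
- by rewrite e_sym.
- by rewrite inE; apply: contraNneq jS => ->.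
- by rewrite inE.
Qed.

Lemma two_branches_avoiding u v : (2 < deg e u)%N ->
  exists a b, [/\ e u a, e u b & a != b] /\
    ~~ component [set u] a v /\ ~~ component [set u] b v.
Proof.
move=> deg_u; set N := [set a | e u a]; set B := [set a | component [set u] a v].
have /card_gt1P [a [b [aN bN ab]]] : (1 < #|N :\: B|)%N.
  suff : (#|N :&: B| <= 1)%N.
    by move: deg_u; rewrite /deg -/N -(cardsID B N); lia.
  apply/card_le1_eqP => x y; rewrite !inE => /andP [ux xv] /andP [uy yv].
  have xy : component [set u] x y.
    by apply: connect_trans xv _; rewrite -/(component _ v y) component_sym.
  apply/eqP; apply: contraTT xy; rewrite eq_sym.
  exact: nbrs_disconnected (set11 u) ux uy.
move: aN bN; rewrite !inE => /andP [nav ua] /andP [nbv ub].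
by exists a, b.
Qed.

Lemma branch_avoiding_notin w w' x :
  e w x -> ~~ component [set w] x w' -> x \notin [set w; w'].
Proof.
move=> wx nxw'; rewrite !inE negb_or nbr_neq //=.
by apply: contraNneq nxw' => ->; apply: component_refl.
Qed.

Lemma attach_branch_avoiding w w' x : w' != w -> e w x ->
  ~~ component [set w] x w' ->
  {in [set w; w'], attach [set w; w'] x =1 fun s => nat_of_bool (s == w)}.
Proof.
move=> w'w wx nxw' s; rewrite !inE => /orP [] /eqP ->.
  by rewrite eqxx attach_nbr // !inE eqxx.
rewrite (negbTE w'w) (attach_far (w := w)) ?branch_avoiding_notin //.
by rewrite !inE eqxx.
Qed.

Lemma not_in_G_SSP_deg4 v : (3 < deg e v)%N -> ~ in_G_SSP R e.
Proof.
rewrite /deg; set N := [set w | e v w] => deg_v.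
have [a aN] : exists a, a \in N by apply/card_gt0P; lia.
have /card_gt2P [b [c [d [[bN cN dN] [bc cd db]]]]] : (2 < #|N :\ a|)%N.
  by move: deg_v; rewrite (cardsD1 a) aN; lia.
move: aN bN cN dN; rewrite !inE => va /andP [ba vb] /andP [ca vc] /andP [da vd].
have vS : v \in [set v] := set11 v.
have notin x : e v x -> x \notin [set v] by move=> vx; rewrite inE nbr_neq.
have attach_eq x y :
    e v x -> e v y -> {in [set v], attach [set v] x =1 attach [set v] y}.
  by move=> vx vy s; rewrite inE => /eqP ->; rewrite !attach_nbr.
apply: (@not_in_G_SSP_of_components [set v] a b c d).
- by split; apply: notin.
- by apply: (nbrs_disconnected vS); rewrite // eq_sym.
- exact: (nbrs_disconnected vS).
- by split; apply: (nbrs_disconnected vS); rewrite // eq_sym.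
- exact: attach_eq.
- exact: attach_eq.
Qed.

Lemma not_in_G_SSP_deg3_pair u v :
  u != v -> (2 < deg e u)%N -> (2 < deg e v)%N -> ~ in_G_SSP R e.
Proof.
move=> uv deg_u deg_v.
have [a [b [[ua ub ab] [nav nbv]]]] := two_branches_avoiding v deg_u.
have [c [d [[vc vd cd] [ncu ndu]]]] := two_branches_avoiding u deg_v.
set S := [set u; v]; have SE : [set v; u] = S by rewrite /S setUC.
have uS : u \in S by rewrite !inE eqxx.
have vS : v \in S by rewrite !inE eqxx orbT.
have vu : v != u by rewrite eq_sym.
have attach_a := attach_branch_avoiding vu ua nav.
have attach_b := attach_branch_avoiding vu ub nbv.
have := attach_branch_avoiding uv vc ncu; rewrite SE => attach_c.
have := attach_branch_avoiding uv vd ndu; rewrite SE => attach_d.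
have apart p q : {in S, attach S p =1 fun s => nat_of_bool (s == u)} ->
    {in S, attach S q =1 fun s => nat_of_bool (s == v)} -> ~~ component S p q.
  move=> attach_p attach_q; apply/negP => /attach_component /(_ v).
  by rewrite attach_p // attach_q // eqxx (negbTE vu).
apply: (@not_in_G_SSP_of_components S a b c d).
- split; try exact: branch_avoiding_notin.
    by rewrite -SE; apply: branch_avoiding_notin vc ncu.
  by rewrite -SE; apply: branch_avoiding_notin vd ndu.
- exact: (nbrs_disconnected uS).
- exact: (nbrs_disconnected vS).
- by split; apply: apart.
- by move=> s sS; rewrite attach_a ?attach_b.
- by move=> s sS; rewrite attach_c ?attach_d.
Qed.

End Forest.

End Components.

Theorem corollary2p8 (R : realType) (n : nat) (e : rel 'I_n) :
  simple_graph e -> is_tree e ->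
  ((exists v : 'I_n, (4 <= deg e v)%N) \/
   (exists u v : 'I_n, u != v /\ (3 <= deg e u)%N /\ (3 <= deg e v)%N)) ->
  ~ in_G_SSP R e.
Proof.
move=> [e_sym e_irr] [_ e_acyc] [[v deg_v] | [u [v [uv [deg_u deg_v]]]]].
- exact: (not_in_G_SSP_deg4 e_sym (R := R) e_irr e_acyc deg_v).
- exact: (not_in_G_SSP_deg3_pair e_sym (R := R) e_irr e_acyc uv deg_u deg_v).
Qed.
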